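(* Let $p$ be an odd prime, $a,m\in\mathbb Z_p$ with $m\not\equiv0\pmod p$ and $a\not\equiv0,-1\pmod p$, and put $A_k=\binom ak\binom{-1-a}k\binom{2k}k$. Then $$2a(a+1)\sum_{k=0}^{p-2}\frac{A_k}{m^k(k+1)^2}\equiv(m-4)\sum_{k=0}^{p-1}\frac{kA_k}{m^k}+2\sum_{k=0}^{p-1}\frac{A_k}{m^k}+(4a(a+1)-2)\sum_{k=0}^{p-2}\frac{A_k}{m^k(k+1)}\pmod{p^3}$$ and $$2a(a+1)\sum_{k=0}^{p-2}\frac{A_k}{m^k(k+1)^3}\equiv-m+\Big(2m-8-\frac{m-4}{a(a+1)}\Big)\sum_{k=0}^{p-1}\frac{kA_k}{m^k}+\Big(m-\frac2{a(a+1)}\Big)\sum_{k=0}^{p-1}\frac{A_k}{m^k}+\Big(8a(a+1)-2+\frac2{a(a+1)}\Big)\sum_{k=0}^{p-2}\frac{A_k}{m^k(k+1)}\pmod{p^3}.$$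
   Context: $\mathbb Z_p$ denotes the set of rational numbers whose denominator is not divisible by $p$; for $u,v\in\mathbb Z_p$, $u\equiv v\pmod{p^r}$ means $(u-v)/p^r\in\mathbb Z_p$. For $a$ rational, $\binom a0=1$ and $\binom ak=\frac{a(a-1)\cdots(a-k+1)}{k!}$ for $k\ge1$. *)

From mathcomp Require Import all_boot all_order all_algebra.
Set Implicit Arguments. Unset Strict Implicit. Unset Printing Implicit Defensive.
Import Order.TTheory GRing.Theory Num.Theory.
Local Open Scope ring_scope.

Definition in_Zp (p : nat) (x : rat) : bool := ~~ (p %| `|denq x|)%N.

Definition congp (p r : nat) (u v : rat) : Prop :=
  in_Zp p ((u - v) / ((p ^ r)%N)%:R).

Definition binq (a : rat) (k : nat) : rat :=
  (\prod_(i < k) (a - i%:R)) / (k`!)%:R.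

Definition Ak (a : rat) (k : nat) : rat :=
  binq a k * binq (-1 - a) k * ('C(2 * k, k))%:R.

(** The numbers [A_k] obey the first-order recurrence
      [(k+1)^3 A_(k+1) = 2 (2k+1) (k(k+1) - a(a+1)) A_k].
    Expressing [(k+1) A_(k+1) / m^(k+1)] and [A_(k+1) / m^(k+1)] through
    [A_k] and summing over [k < n] gives two exact identities; solving them for
    the sums with [(k+1)^2] and [(k+1)^3] in the denominator shows that, for
    [n = p - 1], both sides of each congruence differ by [c A_(p-1) / m^(p-1)]
    with [c] a [p]-integer.  The congruences thus reduce to [p^3 | A_(p-1)]:
    [p] divides the central binomial [C(2p-2, p-1)], and each of
    [binom(a, p-1)] and [binom(-1-a, p-1)] has a factor [x - i] with
    [x = i (mod p)] and [i < p - 1], because [a] is neither [0] nor [-1]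
    modulo [p]. *)

From HB Require Import structures.
From mathcomp Require Import all_boot all_order all_algebra.
From mathcomp Require Import ring zify.
Import Order.TTheory GRing.Theory Num.Theory.
Local Open Scope ring_scope.

Lemma binqS a k : binq a k.+1 = binq a k * (a - k%:R) / k.+1%:R.
Proof.
rewrite /binq big_ord_recr /= factS natrM.
by field; rewrite nat1r !pnatr_eq0 -!lt0n fact_gt0.
Qed.

Lemma central_binomialE k : 'C(2 * k, k)%:R = (2 * k)`!%:R / k`!%:R ^+ 2 :> rat.
Proof.
have := @bin_fact (2 * k) k (leq_pmull k (ltn0Sn 1)).
rewrite mul2n -addnn addnK => <-.
by rewrite !natrM -expr2 mulfK // expf_neq0 // pnatr_eq0 -lt0n fact_gt0.
Qed.

Lemma Ak0 a : Ak a 0 = 1.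
Proof. by rewrite /Ak /binq !big_ord0 fact0 muln0 bin0 !divr1. Qed.

Lemma AkS a k : Ak a k.+1 * k.+1%:R ^+ 3 =
  2 * (2 * k%:R + 1) * (k%:R * (k%:R + 1) - a * (a + 1)) * Ak a k.
Proof.
rewrite /Ak !binqS !central_binomialE.
have -> : (2 * k.+1 = (2 * k).+2)%N by lia.
by rewrite !factS; field; rewrite nat1r !pnatr_eq0 -!lt0n fact_gt0.
Qed.

Section Telescoping.
Variables a m : rat.
Hypothesis m_neq0 : m != 0.

Local Notation b := (a * (a + 1)).
Local Notation X k := (Ak a k / m ^+ k).
Local Notation S0 n := (\sum_(0 <= k < n) Ak a k / m ^+ k).
Local Notation S1 n := (\sum_(0 <= k < n) k%:R * Ak a k / m ^+ k).
Local Notation T1 n := (\sum_(0 <= k < n) Ak a k / (m ^+ k * k.+1%:R)).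
Local Notation T2 n := (\sum_(0 <= k < n) Ak a k / (m ^+ k * k.+1%:R ^+ 2)).
Local Notation T3 n := (\sum_(0 <= k < n) Ak a k / (m ^+ k * k.+1%:R ^+ 3)).

Lemma AkS_div_exp k : X k.+1 =
  2 * (2 * k%:R + 1) * (k%:R * (k%:R + 1) - b) * Ak a k
  / (m ^+ k.+1 * k.+1%:R ^+ 3).
Proof. by rewrite -AkS exprSr; field; rewrite nat1r pnatr_eq0 m_neq0 expf_neq0. Qed.

Lemma m_kAkS k : m * (k.+1%:R * Ak a k.+1 / m ^+ k.+1) =
  4 * (k%:R * Ak a k / m ^+ k) - 2 * X k
  + 2 * (1 - 2 * b) * (Ak a k / (m ^+ k * k.+1%:R))
  + 2 * b * (Ak a k / (m ^+ k * k.+1%:R ^+ 2)).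
Proof.
rewrite -mulrA AkS_div_exp exprSr.
by field; rewrite nat1r pnatr_eq0 m_neq0 expf_neq0.
Qed.

Lemma m_AkS k : m * X k.+1 =
  4 * X k - 6 * (Ak a k / (m ^+ k * k.+1%:R))
  + 2 * (1 - 2 * b) * (Ak a k / (m ^+ k * k.+1%:R ^+ 2))
  + 2 * b * (Ak a k / (m ^+ k * k.+1%:R ^+ 3)).
Proof.
by rewrite AkS_div_exp exprSr; field; rewrite nat1r pnatr_eq0 m_neq0 expf_neq0.
Qed.

Lemma m_sum_kAk n :
  m * S1 n.+1 = 4 * S1 n - 2 * S0 n + 2 * (1 - 2 * b) * T1 n + 2 * b * T2 n.
Proof.
rewrite big_nat_recl // !mul0r add0r.
rewrite [LHS]mulr_sumr (eq_bigr _ (fun k _ => m_kAkS k)).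
by rewrite !big_split /= sumrN -!mulr_sumr.
Qed.

Lemma m_sum_Ak n :
  m * (S0 n.+1 - 1) = 4 * S0 n - 6 * T1 n + 2 * (1 - 2 * b) * T2 n + 2 * b * T3 n.
Proof.
rewrite big_nat_recl // Ak0 expr0 divr1 addrC addKr.
rewrite [LHS]mulr_sumr (eq_bigr _ (fun k _ => m_AkS k)).
by rewrite !big_split /= sumrN -!mulr_sumr.
Qed.

Lemma sum_Ak_sq_identity n :
  2 * a * (a + 1) * T2 n
  - ((m - 4) * S1 n.+1 + 2 * S0 n.+1 + (4 * a * (a + 1) - 2) * T1 n)
  = (4 * n%:R - 2) * X n.
Proof.
have T2E : 2 * a * (a + 1) * T2 n =
    m * S1 n.+1 - 4 * S1 n + 2 * S0 n + (4 * a * (a + 1) - 2) * T1 n.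
  by rewrite m_sum_kAk; ring.
by rewrite T2E !big_nat_recr //=; ring.
Qed.

Lemma sum_Ak_cube_identity n : a != 0 -> a + 1 != 0 ->
  2 * a * (a + 1) * T3 n
  - (- m + (2 * m - 8 - (m - 4) / (a * (a + 1))) * S1 n.+1
     + (m - 2 / (a * (a + 1))) * S0 n.+1
     + (8 * a * (a + 1) - 2 + 2 / (a * (a + 1))) * T1 n)
  = (4 + (2 - (a * (a + 1))^-1) * (4 * n%:R - 2)) * X n.
Proof.
move=> a_neq0 a1_neq0.
have T3E : 2 * a * (a + 1) * T3 n =
    m * (S0 n.+1 - 1) - 4 * S0 n + 6 * T1 n - 2 * (1 - 2 * b) * T2 n.
  by rewrite m_sum_Ak; ring.
have T2E : T2 n = (m * S1 n.+1 - 4 * S1 n + 2 * S0 n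
    + (4 * a * (a + 1) - 2) * T1 n) / (2 * a * (a + 1)).
  by rewrite m_sum_kAk; field; rewrite a_neq0 a1_neq0.
rewrite T3E T2E !big_nat_recr //=.
by field; rewrite expf_neq0 // a_neq0 a1_neq0.
Qed.

End Telescoping.

(* The localization of [Z] at [p]: a subring of [rat] for every [p], and the
   [Z_p] of the statement when [p] is prime (see [in_ZpE]). *)
Definition Zloc (p : nat) : {pred rat} := [pred x | coprime p `|denq x|].

Lemma Zloc_frac p (n d : int) : coprime p `|d| -> n%:~R / d%:~R \in Zloc p.
Proof.
move=> p_d; rewrite inE /=.
have [->|d_neq0] := eqVneq d 0; first by rewrite invr0 mulr0 coprimen1.
set y := n%:~R / d%:~R.
have num_den : numq y * d = n * denq y.
  by apply: (@intr_inj rat); rewrite !intrM numqE /y; field; rewrite intr_eq0.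
have : (denq y %| d)%Z.
  rewrite -(@Gauss_dvdzr _ (numq y)) ?num_den ?dvdz_mull //.
  by rewrite coprimez_sym coprimezE coprime_num_den.
by rewrite dvdzE => /coprime_dvdr; apply.
Qed.

Lemma Zloc_subring_closed p : subring_closed (Zloc p).
Proof.
split=> [|x y x_loc y_loc|x y x_loc y_loc]; first by rewrite inE /= coprimen1.
- have -> : x - y = (numq x * denq y - numq y * denq x)%:~R / (denq x * denq y)%:~R.
    rewrite -{1}[x]divq_num_den -{1}[y]divq_num_den intrB !intrM.
    by field; rewrite !intr_eq0 !denq_neq0.
  by apply: Zloc_frac; rewrite abszM coprimeMr; exact/andP.
- have -> : x * y = (numq x * numq y)%:~R / (denq x * denq y)%:~R.
    rewrite -{1}[x]divq_num_den -{1}[y]divq_num_den !intrM.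
    by field; rewrite !intr_eq0 !denq_neq0.
  by apply: Zloc_frac; rewrite abszM coprimeMr; exact/andP.
Qed.

HB.instance Definition _ (p : nat) :=
  GRing.isSubringClosed.Build rat (Zloc p) (Zloc_subring_closed p).

Lemma in_ZpE p x : prime p -> in_Zp p x = (x \in Zloc p).
Proof. by move=> p_prime; rewrite inE /= prime_coprime. Qed.

Lemma Zloc_invn p n : coprime p n -> n%:R^-1 \in Zloc p.
Proof. by move=> p_n; have := @Zloc_frac p 1 n p_n; rewrite -pmulrn div1r. Qed.

Lemma Zloc_residue p x : (0 < p)%N -> x \in Zloc p ->
  exists2 i, (i < p)%N & (x - i%:R) / p%:R \in Zloc p.
Proof.
move=> p_gt0 x_loc.
have [u [v]] := Bezoutz (denq x) p.
rewrite (_ : gcdz _ _ = 1) => [uv|]; last by rewrite /gcdz /= gcdnC (eqP x_loc).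
(* With [u d + v p = 1], the residue of [x = n / d] is [n u] modulo [p]. *)
set r := (numq x * u %% p)%Z; set q := (numq x * u %/ p)%Z.
have r_ge0 : 0 <= r by apply: modz_ge0; rewrite eqz_nat -lt0n.
exists `|r|%N; first by rewrite -ltz_nat gez0_abs // ltz_pmod // ltz_nat.
have -> : (x - `|r|%N%:R) / p%:R = (numq x * v)%:~R / (denq x)%:~R + q%:~R.
  have rE : r = numq x * u - q * p by [].
  have rR : `|r|%N%:R = r%:~R :> rat by rewrite -[in RHS](gez0_abs r_ge0).
  have uE : u%:~R = (1 - v%:~R * p%:R) / (denq x)%:~R :> rat.
    apply: (canRL (mulfK _)); first by rewrite intr_eq0 denq_neq0.
    by apply: (canRL (addrK _)); rewrite pmulrn -!intrM -intrD uv.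
  rewrite -{1}[x]divq_num_den rR rE intrB !intrM uE -pmulrn.
  by field; rewrite intr_eq0 denq_neq0 pnatr_eq0 -lt0n p_gt0.
by rewrite rpredD ?rpred_int ?Zloc_frac.
Qed.

Lemma coprime_fact p n : prime p -> (n < p)%N -> coprime p n`!.
Proof.
move=> p_prime; elim: n => [|n IHn] lt_n_p; first exact: coprimen1.
rewrite factS coprimeMr IHn ?(ltnW lt_n_p) // andbT prime_coprime //.
by rewrite gtnNdvd.
Qed.

Lemma prime_dvd_central_binomial p : prime p -> (p %| 'C(2 * p.-1, p.-1))%N.
Proof.
move=> p_prime.
have := @bin_fact (2 * p.-1) p.-1 (leq_pmull p.-1 (ltn0Sn 1)).
rewrite mul2n -addnn addnK => Cfact.
have : (p %| (p.-1 + p.-1)`!)%N.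
  by apply: dvdn_fact; have := prime_gt1 p_prime; lia.
by rewrite -Cfact Gauss_dvdl // coprimeMr andbb coprime_fact // ltn_predL prime_gt0.
Qed.

Section PrimeLocalization.
Variable p : nat.
Hypothesis p_prime : prime p.

Lemma ZlocV x : x \in Zloc p -> x / p%:R \notin Zloc p -> x^-1 \in Zloc p.
Proof.
move=> x_loc x_unit.
have [p_num|p_Nnum] := boolP (p %| `|numq x|)%N.
  have /divzK numE : (p %| numq x)%Z by rewrite dvdzE.
  case/negP: x_unit.
  have -> : x / p%:R = ((numq x %/ p)%Z)%:~R / (denq x)%:~R.
    rewrite -{1}[x]divq_num_den -{1}numE intrM -pmulrn.
    by field; rewrite intr_eq0 denq_neq0 pnatr_eq0 -lt0n prime_gt0.
  exact: Zloc_frac.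
by rewrite -[x]divq_num_den invf_div Zloc_frac // prime_coprime.
Qed.

Lemma binq_pred_div_p a : a \in Zloc p -> (a + 1) / p%:R \notin Zloc p ->
  binq a p.-1 / p%:R \in Zloc p.
Proof.
move=> a_loc a1_unit.
have p_gt0 := prime_gt0 p_prime.
have [i lt_ip ai_loc] := Zloc_residue p a p_gt0 a_loc.
have lt_ip1 : (i < p.-1)%N.
  rewrite ltn_neqAle -ltnS prednK // lt_ip andbT.
  apply: contraNneq a1_unit => i_eq.
  have pE : p.-1%:R = p%:R - 1 :> rat.
    by rewrite -[in RHS](prednK p_gt0) -natr1 addrK.
  have -> : (a + 1) / p%:R = (a - i%:R) / p%:R + 1.
    by rewrite i_eq pE; field; rewrite pnatr_eq0 -lt0n.
  by rewrite rpredD ?rpred1.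
rewrite /binq (bigD1 (Ordinal lt_ip1)) //= mulrAC [_ * p%:R^-1]mulrAC.
rewrite rpredM ?Zloc_invn ?coprime_fact ?ltn_predL // rpredM //.
by apply: rpred_prod => j _; rewrite rpredB ?rpred_nat.
Qed.

Lemma Ak_pred_div_p3 a : a \in Zloc p -> a / p%:R \notin Zloc p ->
  (a + 1) / p%:R \notin Zloc p -> Ak a p.-1 / (p ^ 3)%N%:R \in Zloc p.
Proof.
move=> a_loc a_unit a1_unit.
rewrite /Ak; have [c ->] := dvdnP (prime_dvd_central_binomial p p_prime).
have -> : binq a p.-1 * binq (-1 - a) p.-1 * (c * p)%N%:R / (p ^ 3)%N%:R =
    binq a p.-1 / p%:R * (binq (-1 - a) p.-1 / p%:R) * c%:R.
  by rewrite natrM natrX; field; rewrite pnatr_eq0 -lt0n prime_gt0.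
rewrite rpredM ?rpred_nat // rpredM ?binq_pred_div_p ?rpredB ?rpredN1 //.
by rewrite addrAC addNr add0r mulNr rpredN.
Qed.

End PrimeLocalization.

Theorem theorem4p1 (p : nat) (a m : rat) :
  prime p -> odd p ->
  in_Zp p a -> in_Zp p m ->
  ~ congp p 1 m 0 -> ~ congp p 1 a 0 -> ~ congp p 1 a (-1) ->
  congp p 3
    (2 * a * (a + 1) *
       \sum_(0 <= k < p.-1) Ak a k / (m ^+ k * (k.+1%:R) ^+ 2))
    ((m - 4) * \sum_(0 <= k < p) k%:R * Ak a k / m ^+ k
     + 2 * \sum_(0 <= k < p) Ak a k / m ^+ k
     + (4 * a * (a + 1) - 2) *
         \sum_(0 <= k < p.-1) Ak a k / (m ^+ k * k.+1%:R))
  /\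
  congp p 3
    (2 * a * (a + 1) *
       \sum_(0 <= k < p.-1) Ak a k / (m ^+ k * (k.+1%:R) ^+ 3))
    (- m
     + (2 * m - 8 - (m - 4) / (a * (a + 1))) *
         \sum_(0 <= k < p) k%:R * Ak a k / m ^+ k
     + (m - 2 / (a * (a + 1))) * \sum_(0 <= k < p) Ak a k / m ^+ k
     + (8 * a * (a + 1) - 2 + 2 / (a * (a + 1))) *
         \sum_(0 <= k < p.-1) Ak a k / (m ^+ k * k.+1%:R)).
Proof.
move=> p_prime _; rewrite /congp !expn1 !subr0 opprK !in_ZpE //.
move=> a_loc m_loc /negP m_unit /negP a_unit /negP a1_unit.
have unit_neq0 x : x / p%:R \notin Zloc p -> x != 0.
  by apply: contraNneq => ->; rewrite mul0r rpred0.
have b_inv : (a * (a + 1))^-1 \in Zloc p.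
  by rewrite invfM rpredM ?ZlocV ?rpredD ?rpred1.
have tail_loc c : c \in Zloc p ->
    c * (Ak a p.-1 / m ^+ p.-1) / (p ^ 3)%N%:R \in Zloc p.
  move=> c_loc.
  rewrite (_ : c * _ / _ = c * m^-1 ^+ p.-1 * (Ak a p.-1 / (p ^ 3)%N%:R)).
    by rewrite rpredM ?Ak_pred_div_p3 // rpredM // rpredX // ZlocV.
  by rewrite exprVn; ring.
have [n p_eq] : exists n, p = n.+1 by exists p.-1; rewrite prednK ?prime_gt0.
subst p; move: tail_loc; rewrite /= => tail_loc.
rewrite sum_Ak_sq_identity ?unit_neq0 // sum_Ak_cube_identity ?unit_neq0 //.
by split; apply: tail_loc; rewrite !(rpred_nat, rpredB, rpredD, rpredM).
Qed.
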